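(* In the setting described in the context, the number of solutions $x\in(\mathbb{R}^* )^n$ of the system $S$ equals $2^{\,n-1-\mathrm{rk}(\bar B)}$ times the number of nonzero real roots $r$ of the eliminant $f$ satisfying $$\Big(\tfrac{g_1(r)}{r^{l_1}}\Big)^{\epsilon_1}\cdots\Big(\tfrac{g_n(r)}{r^{l_n}}\Big)^{\epsilon_n}>0$$ for every $\epsilon=(\epsilon_1,\dots,\epsilon_n)\in\mathbb{Z}^n$ whose reduction modulo $2$ belongs to $\ker\bar B$.
   Context: A circuit is a set $\mathcal{C}\subset\mathbb{Z}^n$ of $n+2$ points whose affine span is $\mathbb{R}^n$. Let $\ell$ be a positive integer and $w_1,\dots,w_n\in\mathbb{Z}^n$ be such that $\mathcal{C}=\{0,\ell e_1,w_1,\dots,w_n\}$ is a circuit. Write $w_i=l_ie_1+v_i$ with $l_i\in\mathbb{Z}$ and $v_i\in\{0\}\times\mathbb{Z}^{n-1}\cong\mathbb{Z}^{n-1}$. For $i=1,\dots,n$ let $g_i(x)=a_i+b_ix^{\ell}$ with $a_i,b_i$ nonzero real numbers, such that no two of the $g_i$ have a common complex root. The system $S$ is $x^{w_i}=g_i(x_1)$, $i=1,\dots,n$, where $x=(x_1,\dots,x_n)$ and $x^{w}=x_1^{w^1}\cdots x_n^{w^n}$. After reordering $w_1,\dots,w_n$, the (unique up to sign) primitive integer linear relation among $e_1,w_1,\dots,w_n$ is written $\lambda_0e_1+\sum_{i=1}^{t}\lambda_iw_i=\sum_{i=t+1}^{\nu}\lambda_iw_i$ with $1\le\nu\le n$,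 $0\le t\le\nu$, $\lambda_0,\dots,\lambda_\nu$ coprime integers, $\lambda_0\ge0$ and $\lambda_1,\dots,\lambda_\nu>0$. The eliminant of $S$ is $f(x)=x^{\lambda_0}\prod_{i=1}^{t}g_i(x)^{\lambda_i}-\prod_{i=t+1}^{\nu}g_i(x)^{\lambda_i}$. $\bar B\in M_{n-1,n}(\mathbb{Z}/2)$ is the matrix whose $i$-th column is the reduction modulo $2$ of $v_i$, and $\mathrm{rk}(\bar B)$ its rank over $\mathbb{Z}/2$. *)

From HB Require Import structures.
From mathcomp Require Import all_boot all_order all_algebra.
From mathcomp Require Import reals.
From mathcomp Require Import complex.
Set Implicit Arguments. Unset Strict Implicit. Unset Printing Implicit Defensive.
Import Order.TTheory GRing.Theory Num.Theory.
Local Open Scope ring_scope.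

(* Conventions: the ambient dimension is n = m.+1 (n >= 1 is forced by the
   circuit hypothesis).  Coordinates are indexed by 'I_(m.+1), coordinate
   ord0 being the first one (e_1).  The points w_1..w_n are the rows of an
   integer matrix W : W i j = j-th coordinate of w_i. *)

Definition exact_count (T : eqType) (P : T -> Prop) (k : nat) : Prop :=
  exists s : seq T, [/\ uniq s, (forall x, x \in s <-> P x) & size s = k].

Section Setting.
Variables (R : realType) (m : nat).
Local Notation n := m.+1.

Definition gfun (ell : nat) (a b : 'I_n -> R) (i : 'I_n) (x : R) : R :=
  a i + b i * x ^+ ell.

Definition gfunC (ell : nat) (a b : 'I_n -> R) (i : 'I_n) (z : R[i]) : R[i] :=
  ((a i)%:C)%C + ((b i)%:C)%C * z ^+ ell.

(* the circuit C = {0, ell e1, w_1, ..., w_n} : n+2 distinct points of Z^n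
   whose affine span is R^n *)
Definition is_circuit (ell : nat) (W : 'M[int]_n) : Prop :=
  [/\ (forall i, row i W != 0),
      (forall i, row i W != \row_j (ell%:Z * (j == ord0)%:Z)),
      (0 < ell)%N,
      (forall i j, i != j -> row i W != row j W)
    & \rank (col_mx (\row_j ((ell%:R : R) * (j == ord0)%:R))
                    (map_mx (fun z : int => (z%:~R : R)) W)) = n].

(* mu0 e1 + sum_i mu_i w_i = 0, mu0 >= 0, (mu0, mu_1, ..., mu_n) coprime:
   this is the relation  lambda_0 e1 + sum_{i<=t} lambda_i w_i
   = sum_{t<i<=nu} lambda_i w_i  with mu_i = lambda_i (i <= t),
   mu_i = - lambda_i (t < i <= nu), mu_i = 0 (i > nu). *)
Definition primitive_relation (W : 'M[int]_n) (mu0 : nat) (mu : 'I_n -> int)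
  : Prop :=
  (forall j : 'I_n, mu0%:Z * (j == ord0)%:Z + \sum_i mu i * W i j = 0) /\
  (forall d : nat, (d %| mu0)%N -> (forall i, (d %| `|mu i|)%N) -> d = 1%N).

Definition eliminant (ell : nat) (a b : 'I_n -> R) (mu0 : nat)
  (mu : 'I_n -> int) (x : R) : R :=
  x ^+ mu0 * \prod_(i | 0 < mu i) gfun ell a b i x ^+ `|mu i|%N
  - \prod_(i | mu i < 0) gfun ell a b i x ^+ `|mu i|%N.

(* Bbar in M_{n-1,n}(Z/2): i-th column = v_i mod 2, where
   v_i = (coordinates 2..n of w_i) *)
Definition Bbar (W : 'M[int]_n) : 'M['F_2]_(m, n) :=
  \matrix_(k < m, i < n) ((W i (lift ord0 k))%:~R : 'F_2).

Definition red2 (eps : 'I_n -> int) : 'cV['F_2]_n :=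
  \col_i ((eps i)%:~R : 'F_2).

Definition monom (W : 'M[int]_n) (i : 'I_n) (x : 'rV[R]_n) : R :=
  \prod_j (x 0 j) ^ (W i j).

Definition is_solution (ell : nat) (a b : 'I_n -> R) (W : 'M[int]_n)
  (x : 'rV[R]_n) : Prop :=
  (forall j, x 0 j != 0) /\
  (forall i, monom W i x = gfun ell a b i (x 0 ord0)).

Definition good_root (ell : nat) (a b : 'I_n -> R) (W : 'M[int]_n)
  (mu0 : nat) (mu : 'I_n -> int) (r : R) : Prop :=
  [/\ r != 0, eliminant ell a b mu0 mu r = 0 &
      forall eps : 'I_n -> int, Bbar W *m red2 eps = 0 ->
        0 < \prod_i (gfun ell a b i r / r ^ (W i ord0)) ^ (eps i)].

End Setting.

From HB Require Import structures.
From mathcomp Require Import all_boot all_order all_algebra.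
From mathcomp Require Import reals complex.
From mathcomp Require Import boolp sequences exp polyrcf.
From mathcomp.algebra_tactics Require Import ring.
Import Order.TTheory GRing.Theory Num.Theory.
Local Open Scope ring_scope.
Set Implicit Arguments. Unset Strict Implicit. Unset Printing Implicit Defensive.

(* Dividing the i-th equation by x_1^l_i, a solution with x_1 = r is a point
   y of (R^* )^(n-1) with y^v_i = c_i(r) := g_i(r) / r^l_i for all i.  Writing
   y_k = +- exp u_k splits this monomial system into a linear system over R
   for u, whose matrix B has rank n - 1 because C is a circuit, and a linear
   system over Z/2 for the signs, whose matrix is Bbar.  The first is
   solvable iff prod_i c_i(r)^lambda_i = 1, i.e. f(r) = 0, and then has a
   unique solution; the second is solvable iff the sign vector of c(r) is
   orthogonal to ker Bbar, which is the positivity condition on r, and then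
   has 2^(n-1-rk Bbar) solutions. *)

Lemma card_affine_solutions (F : finFieldType) m n (B : 'M[F]_(m, n))
    (c : 'rV_n) :
  (c <= B)%MS -> exact_count (fun s : 'rV_m => s *m B = c) (#|F| ^ (m - \rank B)).
Proof.
case/submxP=> s0 def_c; set K := row_base (kermx B).
have KB0 : K *m B = 0 by apply/sub_kermxP; rewrite eq_row_base.
exists [seq s0 + t *m K | t <- enum {: 'rV[F]_(\rank (kermx B))}]; split.
- rewrite map_inj_uniq ?enum_uniq // => t1 t2 /addrI.
  exact: (row_free_inj (row_base_free _)).
- move=> s; split=> [/mapP[t _ ->]|sBc].
    by rewrite mulmxDl -mulmxA KB0 mulmx0 addr0.
  have /submxP[t def_s] : (s - s0 <= K)%MS.
    by rewrite eq_row_base; apply/sub_kermxP; rewrite mulmxBl sBc def_c subrr.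
  by apply/mapP; exists t; rewrite ?mem_enum // -def_s addrC subrK.
- by rewrite size_map -cardT card_mx mul1n mxrank_ker.
Qed.

Lemma annihilated_submx (F : fieldType) m n (B : 'M[F]_(m, n)) (c : 'rV_n) :
  (forall e : 'cV_n, B *m e = 0 -> c *m e = 0) -> (c <= B)%MS.
Proof.
move=> annih; rewrite submxE; apply/eqP/rowP => j.
have := annih (cokermx B *m delta_mx j 0).
rewrite mulmxA mulmx_coker mul0mx => /(_ erefl)/colP/(_ 0).
by rewrite mulmxA -colE !mxE.
Qed.

Lemma F2_cases (t : 'F_2) : t = 0 \/ t = 1.
Proof. by case: t => [[|[|]]] //= ?; [left|right]; apply/eqP. Qed.

Section SignBit.
Variable R : realFieldType.

Definition sgn2 (x : R) : 'F_2 := ((x < 0)%R)%:R.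

Definition sign2 (t : 'F_2) : R := if t == 0 then 1 else -1.

Lemma sgn2M x y : x != 0 -> y != 0 -> sgn2 (x * y) = sgn2 x + sgn2 y.
Proof.
move=> x0 y0; rewrite /sgn2 mulr_lt0 x0 y0 /=.
by case: (x < 0); case: (y < 0); apply/eqP.
Qed.

Lemma sgn2V x : sgn2 x^-1 = sgn2 x.
Proof. by rewrite /sgn2 invr_lt0. Qed.

Lemma sgn2X x k : x != 0 -> sgn2 (x ^+ k) = sgn2 x *+ k.
Proof.
move=> x0; elim: k => [|k IHk]; first by rewrite /sgn2 ltr10.
by rewrite exprS sgn2M ?expf_neq0 // IHk mulrS.
Qed.

Lemma sgn2_exprz x (z : int) : x != 0 -> sgn2 (x ^ z) = sgn2 x * z%:~R.
Proof.
move=> x0; case: z => k; first by rewrite sgn2X // mulr_natr.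
rewrite NegzE -exprnN sgn2V sgn2X // intrN mulrN mulr_natr.
by rewrite oppr_pchar2 // pchar_Fp.
Qed.

Lemma sgn2_prod (I : Type) (r : seq I) (P : pred I) (F : I -> R) :
  (forall i, P i -> F i != 0) ->
  sgn2 (\prod_(i <- r | P i) F i) = \sum_(i <- r | P i) sgn2 (F i).
Proof.
move=> F_neq0; apply: proj2 (big_ind2 (fun x s => x != 0 /\ sgn2 x = s) _ _ _).
- by rewrite oner_neq0 /sgn2 ltr10.
- by move=> x1 s1 x2 s2 [x1_neq0 <-] [x2_neq0 <-]; rewrite mulf_neq0 ?sgn2M.
- by move=> i /F_neq0.
Qed.

Lemma sign2_sgn2 x : sign2 (sgn2 x) * `|x| = x.
Proof.
rewrite /sign2 /sgn2; case: ltrP => [x_lt0|x_ge0]; last by rewrite mul1r ger0_norm.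
by rewrite (_ : _ == 0 = false) ?mulN1r ?ltr0_norm ?opprK //; apply/eqP.
Qed.

Lemma sgn2_sign2 t p : 0 < p -> sgn2 (sign2 t * p) = t.
Proof.
move=> p_gt0; rewrite /sgn2 /sign2; case: (F2_cases t) => ->.
  by rewrite eqxx mul1r ltNge ltW.
by rewrite (_ : 1 == 0 = false) ?mulN1r ?oppr_lt0 ?p_gt0 //; apply/eqP.
Qed.

Lemma norm_sign2 t p : 0 < p -> `|sign2 t * p| = p.
Proof.
by move=> p_gt0; rewrite normrM /sign2; case: ifP; rewrite ?normrN normr1 mul1r gtr0_norm.
Qed.

Lemma sign2_neq0 t : sign2 t != 0.
Proof. by rewrite /sign2; case: ifP; rewrite ?oppr_eq0 oner_eq0. Qed.

Lemma sgn2_norm_inj x y : `|x| = `|y| -> sgn2 x = sgn2 y -> x = y.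
Proof. by move=> Exy Sxy; rewrite -(sign2_sgn2 x) -(sign2_sgn2 y) Exy Sxy. Qed.

Lemma gt0_sgn2 x : x != 0 -> (0 < x) = (sgn2 x == 0).
Proof.
move=> x0; rewrite /sgn2; case: (ltrP x 0) => [x_lt0|x_ge0].
  by rewrite lt_gtF //; apply/esym/eqP.
by rewrite lt0r x0 x_ge0 eqxx.
Qed.

Lemma sgn2_prod_exprz n (c : 'rV[R]_n) (eps : 'I_n -> int) :
  (forall i, c 0 i != 0) ->
  sgn2 (\prod_i c 0 i ^ eps i) = (map_mx sgn2 c *m \col_i (eps i)%:~R) 0 0.
Proof.
move=> c_neq0; rewrite sgn2_prod => [|i _]; last exact: expfz_neq0.
by rewrite mxE; apply: eq_bigr => i _; rewrite sgn2_exprz // !mxE.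
Qed.

End SignBit.
Arguments sign2 {R}.

Section IntegerPowers.
Variable F : fieldType.

Lemma prodfXzl (I : Type) (r : seq I) (P : pred I) (G : I -> F) (z : int) :
  \prod_(i <- r | P i) G i ^ z = (\prod_(i <- r | P i) G i) ^ z.
Proof. by rewrite (big_morph (fun x => x ^ z) (fun x y => expfzMl x y z) (exp1rz _ z)). Qed.

Lemma prodfXzr (I : Type) (r : seq I) (P : pred I) (f : I -> int) (x : F) :
  x != 0 -> \prod_(i <- r | P i) x ^ f i = x ^ (\sum_(i <- r | P i) f i).
Proof.
move=> x_neq0; apply: esym; apply: (big_morph (fun z : int => x ^ z)) => [u v|].
  exact: expfzDr.
exact: expr0z.
Qed.

End IntegerPowers.

Lemma normr_exprz (R : numFieldType) (x : R) (z : int) : `|x ^ z| = `|x| ^ z.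
Proof. by case: z => k; rewrite /exprz ?normfV normrX. Qed.

Lemma expR_exprz (R : realType) (x : R) (z : int) : expR x ^ z = expR (z%:~R * x).
Proof.
case: z => k; first by rewrite /exprz -expRM_natl.
by rewrite NegzE -exprnN /exprz intrN mulNr expRN -expRM_natl.
Qed.

Lemma map_mx_lnK (R : realType) l (p : 'rV[R]_l) :
  (forall j, 0 < p 0 j) -> map_mx expR (map_mx (@ln R) p) = p.
Proof. by move=> p_gt0; apply/rowP => j; rewrite !mxE lnK ?posrE. Qed.

Definition intmx (R : nzRingType) k n (E : 'M[int]_(k, n)) : 'M[R]_(k, n) :=
  map_mx (fun z : int => z%:~R) E.

Definition monomial_map (R : fieldType) k n (E : 'M[int]_(k, n)) (y : 'rV[R]_k)
    : 'rV[R]_n :=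
  \row_i \prod_j y 0 j ^ E j i.

Section MonomialMap.
Variables (k n : nat) (E : 'M[int]_(k, n)).

Lemma monomial_map_neq0 (R : fieldType) (y : 'rV[R]_k) :
  (forall j, y 0 j != 0) -> forall i, monomial_map E y 0 i != 0.
Proof. by move=> y_neq0 i; rewrite mxE; apply/prodf_neq0 => j _; rewrite expfz_neq0. Qed.

Lemma prod_monomial_map_exprz (R : fieldType) (y : 'rV[R]_k) (v : 'I_n -> int) :
  (forall j, y 0 j != 0) ->
  \prod_i monomial_map E y 0 i ^ v i = \prod_j y 0 j ^ (\sum_i E j i * v i).
Proof.
move=> y_neq0; under eq_bigr => i _ do rewrite mxE -prodfXzl.
rewrite exchange_big /=; apply: eq_bigr => j _.
by rewrite -prodfXzr //; apply: eq_bigr => i _; rewrite exprz_exp.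
Qed.

Lemma sgn2_monomial_map (R : realFieldType) (y : 'rV[R]_k) :
  (forall j, y 0 j != 0) ->
  map_mx (@sgn2 R) (monomial_map E y) = map_mx (@sgn2 R) y *m intmx _ E.
Proof.
move=> y_neq0; apply/rowP => i; rewrite !mxE sgn2_prod => [|j _]; last first.
  exact: expfz_neq0.
by apply: eq_bigr => j _; rewrite sgn2_exprz // !mxE.
Qed.

Lemma normr_monomial_map (R : realFieldType) (y : 'rV[R]_k) :
  map_mx Num.norm (monomial_map E y) = monomial_map E (map_mx Num.norm y).
Proof.
apply/rowP => i; rewrite !mxE normr_prod.
by apply: eq_bigr => j _; rewrite normr_exprz mxE.
Qed.

Section Positive.
Variable R : realType.

Lemma monomial_map_expR (u : 'rV[R]_k) :
  monomial_map E (map_mx expR u) = map_mx expR (u *m intmx _ E).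
Proof.
apply/rowP => i; rewrite !mxE expR_sum.
by apply: eq_bigr => j _; rewrite !mxE expR_exprz mulrC.
Qed.

Lemma pos_monomial_map_inj (p q : 'rV[R]_k) :
  row_free (intmx R E) -> (forall j, 0 < p 0 j) -> (forall j, 0 < q 0 j) ->
  monomial_map E p = monomial_map E q -> p = q.
Proof.
move=> E_free p_gt0 q_gt0; rewrite -(map_mx_lnK p_gt0) -(map_mx_lnK q_gt0).
rewrite !monomial_map_expR => /rowP Epq; congr map_mx.
apply: (row_free_inj E_free); apply/rowP => i.
by apply: expR_inj; have := Epq i; rewrite !mxE.
Qed.

Lemma pos_monomial_map_surj (d : 'rV[R]_n) :
  (forall i, 0 < d 0 i) -> (map_mx (@ln R) d <= intmx R E)%MS ->
  exists2 p : 'rV[R]_k, (forall j, 0 < p 0 j) & monomial_map E p = d.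
Proof.
move=> d_gt0 /submxP[u def_lnd]; exists (map_mx expR u).
  by move=> j; rewrite mxE expR_gt0.
by rewrite monomial_map_expR -def_lnd map_mx_lnK.
Qed.

End Positive.
End MonomialMap.

Lemma card_monomial_fiber (R : realType) k n (E : 'M[int]_(k, n)) (c : 'rV[R]_n) :
  row_free (intmx R E) -> (forall i, c 0 i != 0) ->
  (map_mx (@ln R) (map_mx Num.norm c) <= intmx R E)%MS ->
  (map_mx (@sgn2 R) c <= intmx 'F_2 E)%MS ->
  exact_count (fun y : 'rV[R]_k => (forall j, y 0 j != 0) /\ monomial_map E y = c)
    (2 ^ (k - \rank (intmx 'F_2 E))).
Proof.
move=> E_free c_neq0 lnc_sub sgnc_sub.
have [S [S_uniq S_mem S_size]] := card_affine_solutions sgnc_sub.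
have normc_gt0 i : 0 < map_mx Num.norm c 0 i by rewrite mxE normr_gt0.
have [p p_gt0 def_normc] := pos_monomial_map_surj normc_gt0 lnc_sub.
pose signed (s : 'rV['F_2]_k) := \row_j (sign2 (s 0 j) * p 0 j).
have sgn2_signed s : map_mx (@sgn2 R) (signed s) = s.
  by apply/rowP => j; rewrite !mxE sgn2_sign2.
have norm_signed s : map_mx Num.norm (signed s) = p.
  by apply/rowP => j; rewrite !mxE norm_sign2.
have row_sgn2_norm_inj (x y : 'rV[R]_n) :
    map_mx Num.norm x = map_mx Num.norm y -> map_mx (@sgn2 R) x = map_mx (@sgn2 R) y ->
    x = y.
  move=> /rowP Nxy /rowP Sxy; apply/rowP => i.
  by apply: sgn2_norm_inj; [have := Nxy i | have := Sxy i]; rewrite !mxE.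
exists [seq signed s | s <- S]; split.
- by rewrite map_inj_uniq // => s1 s2 /(congr1 (map_mx (@sgn2 R))); rewrite !sgn2_signed.
- move=> y; split=> [/mapP[s /S_mem sE ->]|[y_neq0 def_c]].
    have signed_neq0 j : signed s 0 j != 0.
      by rewrite mxE mulf_neq0 ?sign2_neq0 ?gt_eqF.
    split=> //; apply: row_sgn2_norm_inj.
      by rewrite normr_monomial_map norm_signed.
    by rewrite sgn2_monomial_map // sgn2_signed.
  have norm_y : map_mx Num.norm y = p.
    apply: (pos_monomial_map_inj E_free) => // [j|]; first by rewrite mxE normr_gt0.
    by rewrite -normr_monomial_map def_c.
  apply/mapP; exists (map_mx (@sgn2 R) y).
    by apply/S_mem; rewrite -sgn2_monomial_map // def_c.
  by apply/rowP => j; rewrite !mxE -norm_y mxE sign2_sgn2.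
- by rewrite size_map S_size card_Fp.
Qed.

Section ExactCount.
Variables (A B : eqType) (P : A -> Prop) (Q : B -> Prop).

Lemma exact_count_image (f : A -> B) k :
  injective f -> (forall b, Q b <-> exists2 a, P a & f a = b) ->
  exact_count P k -> exact_count Q k.
Proof.
move=> f_inj Q_image [s [s_uniq s_mem <-]]; exists [seq f a | a <- s]; split.
- by rewrite map_inj_uniq.
- move=> b; rewrite Q_image; split=> [/mapP[a /s_mem Pa ->]|[a /s_mem a_in <-]].
    by exists a.
  exact: map_f.
- by rewrite size_map.
Qed.

Lemma exact_count_fibered (f : B -> A) N k :
  exact_count P N -> (forall a, P a -> exact_count (fun b => Q b /\ f b = a) k) ->
  (forall b, Q b -> P (f b)) -> exact_count Q (N * k).
Proof.
move=> [s [s_uniq s_mem <-]] count_fiber Q_P.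
suff [t [t_uniq t_mem t_size]] : exists t : seq B,
    [/\ uniq t, forall b, b \in t <-> Q b /\ f b \in s & size t = (size s * k)%N].
  exists t; split=> // b; rewrite t_mem; split=> [[] //|Qb].
  by split=> //; apply/s_mem/Q_P.
have {s_mem} s_P a : a \in s -> P a by move/s_mem.
elim: s s_uniq s_P => [_ _|a s IHs /= /andP[a_notin s_uniq] s_P].
  by exists [::]; split=> // b; rewrite in_nil; split=> // [[]].
have [t [t_uniq t_mem t_size]] :=
  IHs s_uniq (fun a' a'_in => s_P a' (mem_behead (s := a :: s) a'_in)).
have [u [u_uniq u_mem u_size]] := count_fiber a (s_P a (mem_head a s)).
exists (u ++ t); split; last by rewrite size_cat mulSn u_size t_size.
- rewrite cat_uniq u_uniq t_uniq andbT; apply/hasPn => b /t_mem[_ fb_in].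
  by apply/negP => /u_mem[_ fb_a]; move: a_notin; rewrite -fb_a fb_in.
- move=> b; rewrite mem_cat in_cons.
  split=> [/orP[/u_mem[Qb ->]|/t_mem[Qb fb_in]]|[Qb /orP[/eqP fb_a|fb_in]]].
  + by split; rewrite ?eqxx.
  + by split; rewrite ?fb_in ?orbT.
  + by apply/orP; left; apply/u_mem.
  + by apply/orP; right; apply/t_mem.
Qed.

Lemma exact_count_sub_seq (s : seq A) :
  (forall a, P a -> a \in s) -> exists k, exact_count P k.
Proof.
move=> P_s; exists (size (undup [seq a <- s | `[< P a >]])).
exists (undup [seq a <- s | `[< P a >]]); split=> // [|a]; first exact: undup_uniq.
rewrite mem_undup mem_filter; split=> [/andP[/asboolP] //|Pa].
by rewrite P_s // andbT; apply/asboolP.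
Qed.

End ExactCount.

Section RowCons.
Variables (R : Type) (m : nat).

Definition cons_row (r : R) (y : 'rV[R]_m) : 'rV[R]_m.+1 :=
  \row_j oapp (fun k => y 0 k) r (unlift ord0 j).

Definition behead_row (x : 'rV[R]_m.+1) : 'rV[R]_m := \row_k x 0 (lift ord0 k).

Lemma cons_row0 r y : cons_row r y 0 ord0 = r.
Proof. by rewrite mxE unlift_none. Qed.

Lemma behead_cons_row r y : behead_row (cons_row r y) = y.
Proof. by apply/rowP => k; rewrite !mxE liftK. Qed.

Lemma cons_behead_row (x : 'rV[R]_m.+1) : cons_row (x 0 ord0) (behead_row x) = x.
Proof. by apply/rowP => j; rewrite !mxE; case: unliftP => [k|] -> /=; rewrite ?mxE. Qed.

End RowCons.

Section Circuit.
Variables (R : realType) (m ell : nat) (W : 'M[int]_m.+1).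
Local Notation n := m.+1.

Definition Bmx : 'M[int]_(m, n) := \matrix_(k, i) W i (lift ord0 k).

Lemma BbarE : Bbar W = intmx 'F_2 Bmx.
Proof. by apply/matrixP => k i; rewrite !mxE. Qed.

Lemma monom_cons_behead i (x : 'rV[R]_n) :
  monom W i x = x 0 ord0 ^ W i ord0 * monomial_map Bmx (behead_row x) 0 i.
Proof. by rewrite /monom big_ord_recl !mxE; congr (_ * _); apply: eq_bigr => k _; rewrite !mxE. Qed.

Hypothesis W_circuit : is_circuit R ell W.

(* If u B = 0 then (0, u) is orthogonal to ell e_1 and to every w_i, which
   span R^n. *)
Lemma Bmx_free : row_free (intmx R Bmx).
Proof.
case: W_circuit => _ _ _ _; set A := col_mx _ _ => rankA.
have AT_free : row_free A^T by rewrite /row_free mxrank_tr rankA.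
rewrite -kermx_eq0; apply/eqP/row_matrixP => k; rewrite row0.
set u := row k _; have /eqP uB0 : u *m intmx R Bmx == 0.
  by rewrite /u -row_mul mulmx_ker row0.
clearbody u; pose u' : 'rV[R]_n := cons_row 0 u.
suff /rowP u'0 : u' = 0 by apply/rowP => k'; have := u'0 (lift ord0 k'); rewrite !mxE liftK.
apply: (row_free_inj AT_free); rewrite mul0mx tr_col_mx mul_mx_row.
apply/rowP => p; rewrite !mxE; case: (split p) => q; rewrite !mxE.
  by rewrite big1 // => j _; rewrite !mxE; case: unliftP => [k' ->|->] /=; rewrite ?mulr0 ?mul0r.
rewrite big_ord_recl !mxE unlift_none mul0r add0r.
transitivity ((u *m intmx R Bmx) 0 q); last by rewrite uB0 mxE.
by rewrite mxE; apply: eq_bigr => k' _; rewrite !mxE liftK.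
Qed.

Variables (mu0 : nat) (mu : 'I_n -> int).
Hypothesis mu_rel : primitive_relation W mu0 mu.

Lemma Bmx_mu k : \sum_i Bmx k i * mu i = 0.
Proof.
rewrite (eq_bigr (fun i => mu i * W i (lift ord0 k))) => [|i _]; last first.
  by rewrite mxE mulrC.
by have := mu_rel.1 (lift ord0 k); rewrite eq_sym (negbTE (neq_lift _ _)) mulr0 add0r.
Qed.

Lemma W0_mu : \sum_i W i ord0 * - mu i = mu0%:Z.
Proof.
have /eqP := mu_rel.1 ord0; rewrite eqxx mulr1 addr_eq0 => /eqP ->.
by rewrite -sumrN; apply: eq_bigr => i _; rewrite mulrN mulrC.
Qed.

Lemma mu_neq0 : exists i, mu i != 0.
Proof.
apply/existsP; apply: contraT; rewrite negb_exists => /forallP /= mu0_all.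
have mu_eq0 i : mu i = 0 by apply/eqP; rewrite -[_ == _]negbK mu0_all.
have mu00 : mu0 = 0%N.
  have := W0_mu; rewrite big1 => [[<-] //|i _].
  by rewrite mu_eq0 oppr0 mulr0.
suff : 2%N = 1%N by [].
by apply: mu_rel.2 => [|i]; rewrite ?mu00 ?mu_eq0.
Qed.

(* Both row spaces are the kernel of mu, as B has rank n - 1. *)
Lemma ln_sub_Bmx (d : 'rV[R]_n) :
  (forall i, 0 < d 0 i) -> \prod_i d 0 i ^ mu i = 1 ->
  (map_mx (@ln R) d <= intmx R Bmx)%MS.
Proof.
move=> d_gt0 prod_d; pose M : 'M[int]_(n, 1) := \col_i mu i.
have BM0 : intmx R Bmx *m intmx R M = 0.
  rewrite -map_mxM; apply/matrixP => k j; rewrite !mxE.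
  by rewrite (eq_bigr (fun i => Bmx k i * mu i)) => [|i _]; rewrite ?Bmx_mu ?mxE.
have rankM : \rank (intmx R M) = 1%N.
  apply/eqP; rewrite eqn_leq rank_leq_col lt0n mxrank_eq0.
  have [i mui_neq0] := mu_neq0; apply: contra mui_neq0 => /eqP/matrixP/(_ i 0).
  by rewrite !mxE => /eqP; rewrite intr_eq0.
have ker_sub : (kermx (intmx R M) <= intmx R Bmx)%MS.
  have B_sub : (intmx R Bmx <= kermx (intmx R M))%MS by apply/sub_kermxP.
  have := mxrank_leqif_sup B_sub; rewrite mxrank_ker rankM subn1 /=.
  by rewrite (eqP Bmx_free) => -[_ <-].
apply: submx_trans ker_sub; apply/sub_kermxP/rowP => j.
have /rowP/(_ j) := monomial_map_expR M (map_mx (@ln R) d).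
rewrite map_mx_lnK // !mxE => /esym; rewrite ord1.
under eq_bigr => i _ do rewrite mxE.
by rewrite prod_d -expR0 => /expR_inj.
Qed.

End Circuit.

Section Fibers.
Variables (R : realType) (m ell : nat) (W : 'M[int]_m.+1) (a b : 'I_m.+1 -> R).
Variables (mu0 : nat) (mu : 'I_m.+1 -> int).
Local Notation n := m.+1.
Local Notation g := (gfun ell a b).

Definition coef_row (r : R) : 'rV[R]_n := \row_i (g i r / r ^ W i ord0).

Definition in_fiber (r : R) (y : 'rV[R]_m) : Prop :=
  (forall k, y 0 k != 0) /\ monomial_map (Bmx W) y = coef_row r.

Lemma coef_row_neq0 r : r != 0 -> (forall i, g i r != 0) -> forall i, coef_row r 0 i != 0.
Proof. by move=> r_neq0 g_neq0 i; rewrite mxE mulf_neq0 ?invr_neq0 ?expfz_neq0. Qed.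

(* eps = 2 e_i vanishes mod 2, so the positivity condition forces g_i(r) <> 0. *)
Lemma good_root_gfun_neq0 r : good_root ell a b W mu0 mu r -> forall i, g i r != 0.
Proof.
case=> r_neq0 _ prod_gt0 i; apply/negP => /eqP gi0.
pose eps j : int := if j == i then 2 else 0.
have red2_eps : red2 eps = 0.
  by apply/colP => j; rewrite !mxE /eps; case: (j == i); apply/eqP.
have := prod_gt0 eps; rewrite red2_eps mulmx0 => /(_ erefl).
by rewrite (bigD1 i) //= /eps eqxx gi0 mul0r exp0rz mul0r ltxx.
Qed.

Lemma good_root_sgn2_orth r : good_root ell a b W mu0 mu r ->
  forall e : 'cV['F_2]_n, Bbar W *m e = 0 -> map_mx (@sgn2 R) (coef_row r) *m e = 0.
Proof.
move=> good e Be0; have g_neq0 := good_root_gfun_neq0 good.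
case: good => r_neq0 _ prod_gt0; have coef_neq0 := coef_row_neq0 r_neq0 g_neq0.
pose eps i : int := nat_of_ord (e i 0).
have red2_eps : red2 eps = e.
  by apply/colP => j; rewrite !mxE /eps; case: (F2_cases (e j 0)) => ->; apply/eqP.
have := prod_gt0 eps; rewrite red2_eps => /(_ Be0).
rewrite (eq_bigr (fun i => coef_row r 0 i ^ eps i)) => [|i _]; last by rewrite mxE.
rewrite gt0_sgn2; last by apply/prodf_neq0 => i _; rewrite expfz_neq0.
rewrite sgn2_prod_exprz // -/(red2 eps) red2_eps => /eqP e_orth.
by apply/rowP => j; rewrite ord1 e_orth mxE.
Qed.

Lemma solutionP x :
  is_solution ell a b W x <-> x 0 ord0 != 0 /\ in_fiber (x 0 ord0) (behead_row x).
Proof.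
split=> [[x_neq0 x_sol]|[x0_neq0 [y_neq0 y_mono]]].
  split=> //; split=> [k|]; first by rewrite mxE.
  apply/rowP => i; rewrite [RHS]mxE -x_sol monom_cons_behead mulrC mulKf //.
  exact: expfz_neq0.
split=> [j|i]; first by case: (unliftP ord0 j) => [k|] -> //; have := y_neq0 k; rewrite mxE.
rewrite monom_cons_behead y_mono mxE mulrC divfK //; exact: expfz_neq0.
Qed.

Lemma prod_gfun_mu r : (forall i, g i r != 0) ->
  \prod_i g i r ^ mu i =
  (\prod_(i | 0 < mu i) g i r ^+ `|mu i|) / \prod_(i | mu i < 0) g i r ^+ `|mu i|.
Proof.
move=> g_neq0; rewrite (big_mkcond (fun i => 0 < mu i)) (big_mkcond (fun i => mu i < 0)).
rewrite -prodf_div; apply: eq_bigr => i _ /=.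
case: (ltrgtP (mu i) 0) => [mu_lt0|mu_gt0|->]; rewrite ?expr0z ?divr1 //.
  have -> : mu i = - (`|mu i|%N)%:Z by rewrite ltz0_abs // opprK.
  by rewrite div1r -exprnN abszN.
by have {1}-> : mu i = (`|mu i|%N)%:Z by rewrite gtz0_abs.
Qed.

Hypothesis mu_rel : primitive_relation W mu0 mu.

Lemma eliminantE r : r != 0 -> (forall i, g i r != 0) ->
  eliminant ell a b mu0 mu r =
  (\prod_i coef_row r 0 i ^ mu i - 1) * \prod_(i | mu i < 0) g i r ^+ `|mu i|.
Proof.
move=> r_neq0 g_neq0.
have -> : \prod_i coef_row r 0 i ^ mu i = \prod_i g i r ^ mu i * r ^+ mu0.
  rewrite -[r ^+ mu0]/(r ^ mu0%:Z) -(W0_mu mu_rel) -prodfXzr // -big_split.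
  by apply: eq_bigr => i _; rewrite mxE expfzMl exprz_inv exprz_exp.
rewrite prod_gfun_mu // /eliminant; field.
by apply/prodf_neq0 => i _; rewrite expf_neq0.
Qed.

Lemma fiber_good_root r y : r != 0 -> in_fiber r y -> good_root ell a b W mu0 mu r.
Proof.
move=> r_neq0 [y_neq0 y_mono].
have coef_neq0 i : coef_row r 0 i != 0 by rewrite -y_mono monomial_map_neq0.
have g_neq0 i : g i r != 0 by have := coef_neq0 i; rewrite mxE mulf_eq0 negb_or => /andP[].
split=> // [|eps Beps0].
  rewrite eliminantE // -y_mono prod_monomial_map_exprz // big1 ?subrr ?mul0r // => k _.
  by rewrite (Bmx_mu mu_rel) expr0z.
have sgn_orth : map_mx (@sgn2 R) (coef_row r) *m red2 eps = 0.
  by rewrite -y_mono sgn2_monomial_map // -BbarE -mulmxA Beps0 mulmx0.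
rewrite (eq_bigr (fun i => coef_row r 0 i ^ eps i)) => [|i _]; last by rewrite mxE.
rewrite gt0_sgn2 ?sgn2_prod_exprz //; last by apply/prodf_neq0 => i _; rewrite expfz_neq0.
by rewrite -/(red2 eps) sgn_orth mxE.
Qed.

Hypothesis W_circuit : is_circuit R ell W.

Lemma card_good_fiber r : good_root ell a b W mu0 mu r ->
  exact_count (in_fiber r) (2 ^ (m - \rank (Bbar W))).
Proof.
move=> good; have g_neq0 := good_root_gfun_neq0 good.
have sgn_orth := good_root_sgn2_orth good.
case: good => r_neq0 elim0 _; have coef_neq0 := coef_row_neq0 r_neq0 g_neq0.
have prod_coef : \prod_i coef_row r 0 i ^ mu i = 1.
  have Q_neq0 : \prod_(i | mu i < 0) g i r ^+ `|mu i| != 0.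
    by apply/prodf_neq0 => i _; rewrite expf_neq0.
  move: elim0; rewrite eliminantE // => /eqP.
  by rewrite mulf_eq0 (negbTE Q_neq0) orbF subr_eq0 => /eqP.
rewrite BbarE; apply: card_monomial_fiber => //.
- exact: Bmx_free W_circuit.
- apply: (ln_sub_Bmx W_circuit mu_rel) => [i|]; first by rewrite mxE normr_gt0.
  transitivity `|\prod_i coef_row r 0 i ^ mu i|; last by rewrite prod_coef normr1.
  by rewrite normr_prod; apply: eq_bigr => i _; rewrite mxE normr_exprz.
- by move: sgn_orth; rewrite BbarE => /annihilated_submx.
Qed.

End Fibers.

Section EliminantPolynomial.
Variables (R : realType) (m ell : nat) (a b : 'I_m.+1 -> R).
Variables (mu0 : nat) (mu : 'I_m.+1 -> int).
Local Notation n := m.+1.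

Hypothesis ell_gt0 : (0 < ell)%N.
Hypothesis a_neq0 : forall i, a i != 0.
Hypothesis b_neq0 : forall i, b i != 0.
Hypothesis ab_cross : forall i j, i != j -> a i * b j != a j * b i.

Definition linprod_poly (P : pred 'I_n) : {poly R} :=
  \prod_(i | P i) ((a i)%:P + (b i)%:P * 'X) ^+ `|mu i|.

(* The factors are polynomials in t = x^ell, so that for mu0 = 0 the
   eliminant is nonzero as soon as its two products differ at a root of
   one linear factor. *)
Definition eliminant_poly : {poly R} :=
  'X^mu0 * (linprod_poly (fun i => 0 < mu i) \Po 'X^ell)
  - (linprod_poly (fun i => mu i < 0) \Po 'X^ell).

Lemma horner_linprod_poly P t :
  (linprod_poly P).[t] = \prod_(i | P i) (a i + b i * t) ^+ `|mu i|.
Proof. by rewrite horner_prod; apply: eq_bigr => i _; rewrite !hornerE. Qed.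

Lemma horner_eliminant_poly r : eliminant_poly.[r] = eliminant ell a b mu0 mu r.
Proof. by rewrite !hornerE !horner_comp !horner_linprod_poly !hornerE. Qed.

Lemma lin_root_eq0 i j : (a j + b j * (- a i / b i) == 0) = (j == i).
Proof.
have [-> | ji] := eqVneq j i; first by apply/eqP; field.
have -> : a j + b j * (- a i / b i) = (a j * b i - a i * b j) / b i by field.
by rewrite mulf_eq0 invr_eq0 (negbTE (b_neq0 i)) orbF subr_eq0 (negbTE (ab_cross ji)).
Qed.

Lemma linprod_poly_lin_root (P : pred 'I_n) i : mu i != 0 ->
  ((linprod_poly P).[- a i / b i] == 0) = P i.
Proof.
move=> mui_neq0; rewrite horner_linprod_poly; apply/prodf_eq0/idP => [[j Pj]|Pi].
  by rewrite expf_eq0 lin_root_eq0 => /andP[_ /eqP <-].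
by exists i; rewrite // expf_eq0 lin_root_eq0 eqxx absz_gt0 mui_neq0.
Qed.

Lemma eliminant_poly_neq0 : (exists i, mu i != 0) -> eliminant_poly != 0.
Proof.
case=> i mui_neq0; have [mu0_eq0|mu0_gt0] := posnP mu0.
  rewrite /eliminant_poly mu0_eq0 expr0 mul1r -comp_polyB comp_poly_eq0; last first.
    by rewrite size_polyXn ltnS.
  apply: contraTneq isT => /eqP; rewrite subr_eq0 => /eqP pos_neg.
  have := linprod_poly_lin_root (fun j => 0 < mu j) mui_neq0.
  rewrite pos_neg linprod_poly_lin_root //=.
  by case: (ltrgtP (mu i) 0) mui_neq0 => // ->.
apply: contraTneq isT => elim0; have := horner_eliminant_poly 0.
rewrite elim0 horner0 /eliminant expr0n gtn_eqF // mul0r sub0r => /esym/eqP.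
rewrite oppr_eq0 => /prodf_eq0[j _]; rewrite expf_eq0 /gfun expr0n gtn_eqF //.
by rewrite mulr0 addr0 (negbTE (a_neq0 j)) andbF.
Qed.

End EliminantPolynomial.

(* A common root t of a_i + b_i t and a_j + b_j t gives a common root z of
   g_i and g_j, any complex ell-th root of t. *)
Lemma cross_neq_of_no_common_root (R : realType) m ell (a b : 'I_m.+1 -> R) :
  (0 < ell)%N -> (forall i, b i != 0) ->
  (forall i j, i != j -> forall z : R[i],
     ~ (gfunC ell a b i z = 0 /\ gfunC ell a b j z = 0)) ->
  forall i j, i != j -> a i * b j != a j * b i.
Proof.
move=> ell_gt0 b_neq0 no_common_root i j ij; apply/negP => /eqP cross_eq.
pose t := - a i / b i; pose z : R[i] := ell.-root (t%:C)%C.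
have zXell : z ^+ ell = (t%:C)%C by rewrite rootCK.
apply: (no_common_root i j ij z); split; rewrite /gfunC zXell -rmorphM -rmorphD.
  by rewrite (_ : a i + b i * t = 0) ?rmorph0 // /t; field.
rewrite (_ : a j + b j * t = (a j * b i - a i * b j) / b i) /t; last by field.
by rewrite cross_eq subrr mul0r rmorph0.
Qed.

Section Solutions.
Variables (R : realType) (m ell : nat) (W : 'M[int]_m.+1) (a b : 'I_m.+1 -> R).
Variables (mu0 : nat) (mu : 'I_m.+1 -> int).
Hypothesis mu_rel : primitive_relation W mu0 mu.

Lemma solution_good_root x :
  is_solution ell a b W x -> good_root ell a b W mu0 mu (x 0 ord0).
Proof. by case/solutionP => x0_neq0; apply: fiber_good_root. Qed.

Lemma card_solutions_over r :
  is_circuit R ell W -> good_root ell a b W mu0 mu r ->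
  exact_count (fun x => is_solution ell a b W x /\ x 0 ord0 = r)
    (2 ^ (m - \rank (Bbar W))).
Proof.
move=> W_circuit good; have [r_neq0 _ _] := good.
apply: (exact_count_image (f := cons_row r) _ _ (card_good_fiber mu_rel W_circuit good)).
  by move=> y1 y2 /(congr1 (@behead_row _ _)); rewrite !behead_cons_row.
move=> x; split=> [[/solutionP[_ fiber_x] x0_r]|[y fiber_y <-]].
  by exists (behead_row x); rewrite -?x0_r ?cons_behead_row.
by rewrite cons_row0; split=> //; apply/solutionP; rewrite cons_row0 behead_cons_row.
Qed.

Lemma good_roots_finite :
  (0 < ell)%N -> (forall i, a i != 0) -> (forall i, b i != 0) ->
  (forall i j, i != j -> a i * b j != a j * b i) ->
  exists k, exact_count (good_root ell a b W mu0 mu) k.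
Proof.
move=> ell_gt0 a_neq0 b_neq0 ab_cross.
have f_neq0 := eliminant_poly_neq0 mu0 ell_gt0 a_neq0 b_neq0 ab_cross (mu_neq0 mu_rel).
apply: (exact_count_sub_seq (s := rootsR (eliminant_poly ell a b mu0 mu))) => r [_ f_r _].
by rewrite -(roots_on_rootsR f_neq0) in_itv /= /root horner_eliminant_poly f_r eqxx.
Qed.

End Solutions.

Theorem proposition1p3 (R : realType) (m : nat) (ell : nat) (W : 'M[int]_m.+1)
  (a b : 'I_m.+1 -> R) (mu0 : nat) (mu : 'I_m.+1 -> int) :
  is_circuit R ell W ->
  (forall i, a i != 0) -> (forall i, b i != 0) ->
  (forall i j, i != j -> forall z : R[i],
     ~ (gfunC ell a b i z = 0 /\ gfunC ell a b j z = 0)) ->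
  primitive_relation W mu0 mu ->
  exists k : nat,
    exact_count (good_root ell a b W mu0 mu) k /\
    exact_count (is_solution ell a b W)
      (2 ^ (m.+1 - 1 - \rank (Bbar W)) * k)%N.
Proof.
move=> W_circuit a_neq0 b_neq0 no_common_root mu_rel.
have ell_gt0 : (0 < ell)%N by case: W_circuit.
have ab_cross := cross_neq_of_no_common_root ell_gt0 b_neq0 no_common_root.
have [k good_count] := good_roots_finite mu_rel ell_gt0 a_neq0 b_neq0 ab_cross.
exists k; split=> //; rewrite subn1 mulnC.
apply: (exact_count_fibered (f := fun x : 'rV[R]_m.+1 => x 0 ord0) good_count).
  by move=> r; apply: card_solutions_over.
exact: solution_good_root.
Qed.
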